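(* Let $1\le t\le k-1$ and let $x$ be the frequency vector of an $\mathrm{OA}(N,k,2,t)$ with symbols from $\{-1,1\}$. If $t$ is even, then the formulation symmetry group of ILP (M) contains (the permutations of variables induced by) $G(k)^{\rm OD}$, and for each $g\in G(k)^{\rm OD}$, $g(x)$ is the frequency vector of an $\mathrm{OA}(N,k,2,t)$ that is OD-equivalent to the one with frequency vector $x$. If $t$ is odd, then the formulation symmetry group of ILP (M) contains $G^{\rm iso}(k,2)$, and for each $g\in G^{\rm iso}(k,2)$, $g(x)$ is the frequency vector of an $\mathrm{OA}(N,k,2,t)$ isomorphic to the one with frequency vector $x$.
   Context: An $\mathrm{OA}(N,k,2,t)$ over $\{-1,1\}$ is an $N\times k$ array such that in every $N\times t$ subarray each of the $2^t$ $t$-tuples appears $N/2^t$ times. Its frequency vector is $x=(x_z)_{z\in\{-1,1\}^k}$, $x_z$ the number of rows equal to $z$. Let $Z$ be the $2^k\times k$ matrix whose rows are all vectors of $\{-1,1\}^k$, with columns $z_1,\dots,z_k$, and for $i_1<\dots<i_r$ let $z_{i_1,\dots,i_r}$ be the entrywise product $z_{i_1}\odot\cdots\odot z_{i_r}$. $M$ is the matrix whose rows are $z_{i_1,\dots,i_r}^{\top}$ for all $1\le r\le t$ and all $i_1<\dots<i_r$. ILP (M) is: minimize $\mathbf 1^{\top}x$ s.t. $\mathbf 1^{\top}x=N$, $Mx=0$, $-Mx=0$, $x\ge0$, $x\in\mathbb Z^{2^k}$. Formulation symmetry group: the set of variable permutations $\pi$ with $\pi(c)=c$ for which there exist row permutations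 of the equality and inequality systems that, together with permuting columns by $\pi$, return the same constraint matrices and right-hand sides. $G(k)^{\rm OD}$ is the group of permutations of $\{-1,1\}^k$ generated by coordinate permutations, single-coordinate sign changes, and $R_i(z_1,\dots,z_k)=(z_1z_i,\dots,z_{i-1}z_i,z_i,z_{i+1}z_i,\dots,z_kz_i)$; $G^{\rm iso}(k,2)$ is the subgroup generated by coordinate permutations and sign changes. A permutation $g$ of $\{-1,1\}^k$ acts on frequency vectors by $g(x)_{g(z)}=x_z$. Two arrays are isomorphic if the multiset of rows of one equals that of the image of the other under some element of $G^{\rm iso}(k,2)$. $X_1,X_2$ are OD-equivalent if $[\mathbf 1,X_1]$ and $[\mathbf 1,X_2]$ are related by signed permutations of rows and columns. *)

From HB Require Import structures.
From mathcomp Require Import all_boot all_order all_fingroup all_algebra.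
Set Implicit Arguments. Unset Strict Implicit. Unset Printing Implicit Defensive.
Import GRing.Theory Num.Theory.
Local Open Scope ring_scope.

(* Points of {-1,1}^k, encoded as boolean vectors: false <-> 1, true <-> -1. *)
Definition pt (k : nat) := {ffun 'I_k -> bool}.

Definition sgn (b : bool) : int := if b then -1 else 1.

Definition freq (N k : nat) (X : 'M[int]_(N, k)) : {ffun pt k -> nat} :=
  [ffun z : pt k => #|[set r : 'I_N | [forall j : 'I_k, X r j == sgn (z j)]]|].

Definition is_OA (N k t : nat) (X : 'M[int]_(N, k)) : Prop :=
  (forall r j, X r j = 1 \/ X r j = -1) /\
  forall (S : {set 'I_k}), #|S| = t ->
  forall u : pt k,
    (#|[set r : 'I_N | [forall j in S, X r j == sgn (u j)]]| * 2 ^ t)%N = N.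

(* rows of M: the products z_{i_1,...,i_r} for 1 <= r <= t, i_1 < ... < i_r,
   indexed by the set {i_1,...,i_r} *)
Definition Mrow (k t : nat) := {S : {set 'I_k} | (0 < #|S| <= t)%N}.

Definition Mentry (k t : nat) (S : Mrow k t) (z : pt k) : int :=
  \prod_(i in val S) sgn (z i).

(* Equality system: row None is 1^T x = N, rows Some (inl S) are M x = 0,
   rows Some (inr S) are -M x = 0. *)
Definition Erow (k t : nat) := option (Mrow k t + Mrow k t).

Definition Aeq (k t : nat) (i : Erow k t) (z : pt k) : int :=
  match i with
  | None => 1
  | Some (inl R) => Mentry R z
  | Some (inr R) => - Mentry R z
  end.

Definition beq (N k t : nat) (i : Erow k t) : int :=
  match i with None => N%:Z | Some _ => 0 end.

(* Inequality system: x >= 0, i.e. I x >= 0, rows indexed by the variables. *)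
Definition Aineq (k : nat) (w z : pt k) : int := (w == z)%:R.
Definition bineq (k : nat) (w : pt k) : int := 0.

Definition cobj (k : nat) (z : pt k) : int := 1.

Definition formulation_sym (N k t : nat) (pi : {perm pt k}) : Prop :=
  (forall z, cobj (pi z) = cobj z) /\
  (exists sigma : {perm Erow k t},
      forall i z, Aeq (sigma i) (pi z) = Aeq i z /\
                  beq N (sigma i) = beq N i) /\
  (exists tau : {perm pt k},
      forall w z, Aineq (tau w) (pi z) = Aineq w z /\
                  bineq (tau w) = bineq w).

Definition coordperm (k : nat) (s : {perm 'I_k}) (z : pt k) : pt k :=
  [ffun i => z (s i)].
Definition signchange (k : nat) (j : 'I_k) (z : pt k) : pt k :=
  [ffun i => if i == j then ~~ z i else z i].
(* R_i(z) = (z_1 z_i, ..., z_{i-1} z_i, z_i, z_{i+1} z_i, ..., z_k z_i);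
   multiplication of +-1 is xor in the boolean encoding *)
Definition Rmap (k : nat) (i : 'I_k) (z : pt k) : pt k :=
  [ffun j => if j == i then z i else addb (z j) (z i)].

Definition iso_gens (k : nat) : {set {perm pt k}} :=
  [set g : {perm pt k} |
     [exists s : {perm 'I_k}, [forall z, g z == coordperm s z]] ||
     [exists j : 'I_k, [forall z, g z == signchange j z]]].

Definition OD_gens (k : nat) : {set {perm pt k}} :=
  iso_gens k :|:
  [set g : {perm pt k} | [exists i : 'I_k, [forall z, g z == Rmap i z]]].

Definition G_iso (k : nat) : {set {perm pt k}} := <<iso_gens k>>%g.
Definition G_OD (k : nat) : {set {perm pt k}} := <<OD_gens k>>%g.

(* action on frequency vectors: g(x)_{g(z)} = x_z *)
Definition act_freq (k : nat) (g : {perm pt k}) (x : {ffun pt k -> nat})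
  : {ffun pt k -> nat} := [ffun w => x ((g^-1)%g w)].

(* isomorphic arrays: the multiset of rows of X2 equals that of the image of
   X1 under some element of G^iso(k,2) *)
Definition isomorphic (N k : nat) (X1 X2 : 'M[int]_(N, k)) : Prop :=
  exists2 h, h \in G_iso k & freq X2 = act_freq h (freq X1).

Definition signed_perm_mx (n : nat) (A : 'M[int]_n) : Prop :=
  exists (s : {perm 'I_n}) (e : 'I_n -> bool),
    A = \matrix_(i, j) (if s i == j then sgn (e i) else 0).

Definition onecol (N k : nat) (X : 'M[int]_(N, k)) : 'M[int]_(N, 1 + k) :=
  row_mx (const_mx 1) X.

Definition OD_equiv (N k : nat) (X1 X2 : 'M[int]_(N, k)) : Prop :=
  exists (P : 'M[int]_N) (Q : 'M[int]_(1 + k)),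
    signed_perm_mx P /\ signed_perm_mx Q /\
    P *m onecol X1 *m Q = onecol X2.

From HB Require Import structures.
From mathcomp Require Import all_boot all_order all_fingroup all_algebra.
From mathcomp Require Import zify ring.
Set Implicit Arguments. Unset Strict Implicit. Unset Printing Implicit Defensive.
Import GRing.Theory Num.Theory.
Local Open Scope ring_scope.

(* For S a set of coordinates let chi_S(z) = prod_(i in S) z_i; the rows of M are
   the chi_S with 1 <= |S| <= t, and an array with +-1 entries is an OA of
   strength t iff every such chi_S sums to zero over its rows.  Call a permutation
   g of {-1,1}^k character preserving when each such chi_S o g is +- chi_S' for
   some S' of the same kind: then g permutes the rows of (1; M; -M) and maps OAs
   to OAs.  Coordinate permutations and sign changes are character preserving
   for every t.  R_i maps chi_S to chi_S * z_i^|S\{i}|, so when |S\{i}| is odd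
   it maps chi_S to chi of S with i toggled: either i is in S and the new size
   is the odd |S\{i}| >= 1, or i is not in S and |S| is odd, hence < t when t
   is even.  On arrays, R_i multiplies each row by its i-th entry and swaps the
   columns 1 and i of [1, X], which is an OD-equivalence. *)

Lemma gen_ind (gT : finGroupType) (A : {set gT}) (P : gT -> Prop) :
  P 1%g -> (forall a b, P a -> b \in A -> P (a * b)%g) ->
  forall g, g \in <<A>>%g -> P g.
Proof.
move=> P1 PM g /gen_prodgP [n [c Ac ->]].
elim: n c Ac => [|n IHn] c Ac; first by rewrite big_ord0.
by rewrite big_ord_recr /=; apply: PM => //; apply: IHn.
Qed.

Lemma prod1D_subsets (R : comPzRingType) (I : finType) (A : {set I}) (c : I -> R) :
  \prod_(i in A) (1 + c i) = \sum_(B : {set I} | B \subset A) \prod_(i in B) c i.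
Proof.
have set_bij : bijective (fun B : {set I} => [ffun i => i \in B]).
  exists (fun f : {ffun I -> bool} => [set i | f i]) => [B | f].
    by apply/setP => i; rewrite !inE ffunE.
  by apply/ffunP => i; rewrite !ffunE inE.
rewrite big_mkcond /=.
transitivity (\prod_i \sum_(b : bool) (if b then (if i \in A then c i else 0) else 1)).
  apply: eq_bigr => i _; rewrite big_bool /=.
  by case: (i \in A); rewrite ?add0r // addrC.
rewrite bigA_distr_bigA (reindex _ (onW_bij _ set_bij)) [RHS]big_mkcond.
apply: eq_bigr => B _; case: ifP => [/subsetP BA | /negbT /subsetPn [i iB iA]].
  rewrite [RHS]big_mkcond; apply: eq_bigr => i _.
  by rewrite ffunE; case: ifP => // /BA ->.
by rewrite (bigD1 i) //= ffunE iB (negbTE iA) mul0r.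
Qed.

Lemma exists_superset_card (T : finType) (A : {set T}) n :
  (#|A| <= n <= #|T|)%N -> exists2 B : {set T}, A \subset B & #|B| = n.
Proof.
case/andP => An nT; have : (n - #|A| <= #|~: A|)%N by have := cardsC A; lia.
case/card_geqP => s [s_uniq s_size sA].
exists (A :|: [set x in s]); first exact: subsetUl.
rewrite cardsU; have -> : A :&: [set x in s] = set0.
  apply/setP => x; rewrite !inE; apply/negbTE/andP => [[xA xs]].
  by have := sA x xs; rewrite inE xA.
by rewrite cards0 subn0 cardsE (card_uniqP s_uniq) s_size subnKC.
Qed.

Lemma eq_sgn a b : (sgn a == sgn b) = (a == b).
Proof. by case: a; case: b. Qed.

Lemma sgn_inj : injective sgn.
Proof. by move=> a b /eqP; rewrite eq_sgn => /eqP. Qed.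

Lemma sgn_eqN1 a : (sgn a == -1) = a.
Proof. by case: a. Qed.

Lemma sgn_addb a b : sgn (a (+) b) = sgn a * sgn b.
Proof. by case: a; case: b; rewrite /sgn /= ?mulN1r ?mul1r ?opprK. Qed.

Lemma sgn_negb a : sgn (~~ a) = - sgn a.
Proof. by case: a; rewrite /sgn /= ?opprK. Qed.

Lemma sgn_sqr a : sgn a * sgn a = 1.
Proof. by rewrite -sgn_addb addbb. Qed.

Lemma sgn_expr a n : sgn a ^+ n = sgn (a && odd n).
Proof. by case: a; rewrite /sgn /= ?expr1n // -signr_odd; case: (odd n). Qed.

Section Characters.

Variable k : nat.

Definition chi (S : {set 'I_k}) (z : pt k) : int := \prod_(i in S) sgn (z i).

Lemma chi_const0 S : chi S [ffun => false] = 1.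
Proof. by rewrite /chi big1 // => i _; rewrite ffunE. Qed.

Lemma chi_delta S j : chi S [ffun i => i == j] = sgn (j \in S).
Proof.
rewrite /chi; case jS: (j \in S).
  rewrite (big_setD1 j jS) ffunE eqxx big1 ?mulr1 // => i /setD1P [ij _].
  by rewrite ffunE (negbTE ij).
by rewrite big1 // => i iS; rewrite ffunE; case: eqP iS => // ->; rewrite jS.
Qed.

Lemma chi_inj S S' : chi S =1 chi S' -> S = S'.
Proof. by move=> E; apply/setP => j; apply: sgn_inj; rewrite -!chi_delta E. Qed.

Lemma chiM_sgn S i z :
  chi S z * sgn (z i) = chi (if i \in S then S :\ i else i |: S) z.
Proof.
rewrite /chi; case: ifP => iS; last by rewrite big_setU1 ?iS // mulrC.
by rewrite (big_setD1 i iS) mulrC mulrA sgn_sqr mul1r.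
Qed.

Lemma chi_coordperm S s z : chi S (coordperm s z) = chi (s @: S) z.
Proof.
rewrite /chi big_imset /=; last by move=> x y _ _; apply: perm_inj.
by apply: eq_bigr => i _; rewrite ffunE.
Qed.

Lemma signchangeK (j : 'I_k) : involutive (signchange j).
Proof.
by move=> u; apply/ffunP => i; rewrite !ffunE; case: eqP => // _; rewrite negbK.
Qed.

Lemma chi_signchange S j z : chi S (signchange j z) = sgn (j \in S) * chi S z.
Proof.
rewrite /chi; case jS: (j \in S); last first.
  rewrite mul1r; apply: eq_bigr => i iS.
  by rewrite ffunE; case: eqP iS => // ->; rewrite jS.
rewrite (big_setD1 j jS) (big_setD1 j jS) /= ffunE eqxx sgn_negb mulNr mulN1r.
by congr (- (_ * _)); apply: eq_bigr => i /setD1P [ij _]; rewrite ffunE (negbTE ij).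
Qed.

Lemma chi_Rmap S i z : chi S (Rmap i z) = chi S z * sgn (z i) ^+ #|S :\ i|.
Proof.
rewrite -prodr_const (eq_bigl (fun j => (j \in S) && (j != i))); last first.
  by move=> j; rewrite !inE andbC.
rewrite big_mkcondr /chi -big_split /=.
by apply: eq_bigr => j _; rewrite ffunE; case: eqP => [->|_]; rewrite ?mulr1 ?sgn_addb.
Qed.

Definition char_preserving (t : nat) (f : pt k -> pt k) : Prop :=
  forall S : {set 'I_k}, (0 < #|S| <= t)%N ->
  exists (S' : {set 'I_k}) (e : bool),
    (0 < #|S'| <= t)%N /\ forall z, chi S (f z) = sgn e * chi S' z.

Lemma eq_char_preserving t f f' :
  f =1 f' -> char_preserving t f -> char_preserving t f'.
Proof.
move=> ff' cf S HS; have [S' [e [HS' E]]] := cf S HS.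
by exists S', e; split=> // z; rewrite -ff'.
Qed.

Lemma char_preserving_id t : char_preserving t id.
Proof. by move=> S HS; exists S, false; split => // z; rewrite mul1r. Qed.

Lemma char_preserving_comp t f h :
  char_preserving t f -> char_preserving t h -> char_preserving t (h \o f).
Proof.
move=> cf ch S HS; have [S1 [e1 [HS1 E1]]] := ch S HS.
have [S2 [e2 [HS2 E2]]] := cf S1 HS1.
by exists S2, (e1 (+) e2); split=> // z; rewrite /= E1 E2 sgn_addb mulrA.
Qed.

Lemma char_preserving_coordperm t s : char_preserving t (coordperm s).
Proof.
move=> S HS; exists (s @: S), false; split => [|z]; last by rewrite mul1r chi_coordperm.
by rewrite card_imset //; apply: perm_inj.
Qed.

Lemma char_preserving_signchange t j : char_preserving t (signchange j).
Proof. by move=> S HS; exists S, (j \in S); split => // z; rewrite chi_signchange. Qed.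

Lemma char_preserving_Rmap t i : ~~ odd t -> char_preserving t (Rmap i).
Proof.
move=> t_even S /andP [S_gt0 S_le_t].
have [oddSi | evenSi] := boolP (odd #|S :\ i|); last first.
  exists S, false; split => [|z]; first by rewrite S_gt0.
  by rewrite chi_Rmap sgn_expr (negbTE evenSi) andbF mulr1 mul1r.
exists (if i \in S then S :\ i else i |: S), false; split => [|z]; last first.
  by rewrite chi_Rmap sgn_expr oddSi andbT mul1r chiM_sgn.
have Si_gt0 := odd_gt0 oddSi; have cardS := cardsD1 i S.
case iS: (i \in S) cardS => /= cardS.
  by rewrite Si_gt0 (leq_trans _ S_le_t) // cardS leq_addl.
have S_neq_t : #|S| != t by apply: contraNneq t_even => <-; rewrite cardS.
by rewrite cardsU1 iS add1n /= ltn_neqAle S_neq_t S_le_t.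
Qed.

End Characters.

Section Balance.

Variables (k : nat) (I : finType).
Implicit Types (z : I -> pt k) (S T : {set 'I_k}) (u : pt k).

Definition agree_count z S u : nat := #|[set r | [forall j in S, z r j == u j]]|.

Definition has_strength t z : Prop :=
  forall S, #|S| = t -> forall u, (agree_count z S u * 2 ^ t)%N = #|I|.

Definition balanced t z : Prop :=
  forall T, (0 < #|T| <= t)%N -> \sum_r chi T (z r) = 0.

Definition supported S u := [forall i in ~: S, ~~ u i].

Lemma balanced_comp t f z :
  char_preserving t f -> balanced t z -> balanced t (f \o z).
Proof.
move=> cf bz T HT; have [T' [e [HT' E]]] := cf T HT.
by rewrite (eq_bigr _ (fun r _ => E (z r))) -mulr_sumr bz // mulr0.
Qed.

Lemma prod_agree S (w u : pt k) :
  \prod_(j in S) (1 + sgn (u j) * sgn (w j)) =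
  if [forall j in S, w j == u j] then 2 ^+ #|S| else 0.
Proof.
case: (boolP [forall j in S, _]) => [/forall_inP agree | /forall_inPn [j jS neq]].
  by rewrite -prodr_const; apply: eq_bigr => j /agree/eqP ->; rewrite sgn_sqr.
rewrite (bigD1 j jS) /= -sgn_addb (_ : u j (+) w j = true) /= ?subrr ?mul0r //.
by move: neq; case: (u j); case: (w j).
Qed.

Lemma agree_count_prod z S u :
  (agree_count z S u)%:Z * 2 ^+ #|S| =
  \sum_r \prod_(j in S) (1 + sgn (u j) * sgn (z r j)).
Proof.
rewrite /agree_count -natz -sumr_const mulr_suml big_mkcond /=.
by apply: eq_bigr => r _; rewrite prod_agree inE; case: ifP; rewrite ?mul1r.
Qed.

Lemma agree_count_balanced t z : balanced t z ->
  forall S u, (#|S| <= t)%N -> (agree_count z S u * 2 ^ #|S|)%N = #|I|.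
Proof.
move=> bal S u S_le_t; apply/eqP.
have pow2 : ((2 ^ #|S|)%N : int) = 2 ^+ #|S| by rewrite -natz natrX.
rewrite -eqz_nat PoszM pow2 agree_count_prod.
(* Expanding the product gives sum_(B \subset S) chi_B(u) sum_r chi_B(z r), and only
   B = set0 survives. *)
under eq_bigr do rewrite prod1D_subsets.
rewrite exchange_big (bigD1 set0) ?sub0set //= [X in _ + X]big1 ?addr0.
  by under eq_bigr do rewrite big_set0; rewrite sumr_const natz.
move=> B /andP [BS B_neq0]; under eq_bigr do rewrite big_split /=.
rewrite -mulr_sumr bal ?mulr0 // card_gt0 B_neq0.
exact: leq_trans (subset_leq_card BS) S_le_t.
Qed.

Lemma sum_chi_supported S T :
  T \subset S -> T != set0 -> \sum_(u | supported S u) chi T u = 0.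
Proof.
move=> TS /set0Pn [j jT]; have jS := subsetP TS j jT.
have E : \sum_(u | supported S u) chi T u = - \sum_(u | supported S u) chi T u.
  rewrite {1}(reindex _ (onW_bij _ (inv_bij (signchangeK j)))) /= -sumrN.
  apply: eq_big => u.
    apply: eq_forallb_in => i; rewrite inE ffunE.
    by case: eqP => // ->; rewrite jS.
  by rewrite chi_signchange jT mulN1r.
by move: E; lia.
Qed.

Lemma balanced_of_strength t z : (t <= k)%N -> has_strength t z -> balanced t z.
Proof.
(* Group the rows by their restriction to a t-set S containing T: all restrictions
   occur equally often, and chi_T sums to zero over the points supported on S. *)
move=> t_le_k str T /andP [T_gt0 T_le_t].
have [S TS cardS] : exists2 S : {set 'I_k}, T \subset S & #|S| = t.
  by apply: exists_superset_card; rewrite T_le_t card_ord.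
pose restr r : pt k := [ffun j => (j \in S) && z r j].
have count_const u : agree_count z S u = agree_count z S [ffun => false].
  by apply/eqP; rewrite -(@eqn_pmul2r (2 ^ t)) ?expn_gt0 // !str.
have count_restr u : supported S u ->
    #|[set r | restr r == u]| = agree_count z S u.
  move=> supp_u; apply: eq_card => r; rewrite !inE.
  apply/eqP/forall_inP => [<- j jS | agree]; first by rewrite ffunE jS.
  apply/ffunP => j; rewrite ffunE; case: (boolP (j \in S)) => [jS | jNS].
    exact/eqP/agree.
  by have := forall_inP supp_u j; rewrite inE jNS => /(_ isT) /negbTE.
rewrite (eq_bigr (chi T \o restr)); last first.
  by move=> r _; apply: eq_bigr => j jT; rewrite ffunE (subsetP TS j jT).
rewrite (partition_big restr (supported S)) => [|r _]; last first.
  by apply/forall_inP => j; rewrite inE ffunE => /negbTE ->.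
rewrite (eq_bigr (fun u => chi T u *+ agree_count z S [ffun => false])).
  by rewrite sumrMnl sum_chi_supported ?mul0rn // -card_gt0.
move=> u supp_u; rewrite -(count_const u) -count_restr //= -sumr_const.
by apply: eq_big => [r | r /eqP <-]; rewrite ?inE.
Qed.

Lemma has_strengthP t z : (t <= k)%N -> has_strength t z <-> balanced t z.
Proof.
move=> t_le_k; split; first exact: balanced_of_strength.
by move=> bal S cardS u; rewrite -cardS (agree_count_balanced bal) // cardS.
Qed.

End Balance.

Section SignedPermEquiv.

Variables m n : nat.
Implicit Types A B C : 'M[int]_(m, n).

Definition signed_perm_equiv A B : Prop :=
  exists (sP : {perm 'I_m}) (eP : 'I_m -> bool) (sQ : {perm 'I_n}) (eQ : 'I_n -> bool),
    forall i j, B i (sQ j) = sgn (eP i) * A (sP i) j * sgn (eQ j).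

Lemma signed_perm_equiv_refl A : signed_perm_equiv A A.
Proof.
exists 1%g, (fun=> false), 1%g, (fun=> false) => i j.
by rewrite !perm1 mul1r mulr1.
Qed.

Lemma signed_perm_equiv_trans A B C :
  signed_perm_equiv A B -> signed_perm_equiv B C -> signed_perm_equiv A C.
Proof.
move=> [sP [eP [sQ [eQ AB]]]] [sP' [eP' [sQ' [eQ' BC]]]].
exists (sP' * sP)%g, (fun i => eP' i (+) eP (sP' i)), (sQ * sQ')%g,
  (fun j => eQ j (+) eQ' (sQ j)) => i j.
by rewrite !permM BC AB !sgn_addb; ring.
Qed.

Lemma signed_perm_equiv_mx A B : signed_perm_equiv A B ->
  exists P Q, signed_perm_mx P /\ signed_perm_mx Q /\ P *m A *m Q = B.
Proof.
move=> [sP [eP [sQ [eQ AB]]]].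
exists (\matrix_(i, j) (if sP i == j then sgn (eP i) else 0)),
       (\matrix_(i, j) (if sQ i == j then sgn (eQ i) else 0)).
split; first by exists sP, eP.
split; first by exists sQ, eQ.
apply/matrixP => i j; rewrite -[in RHS](permKV sQ j) AB mxE.
rewrite (bigD1 ((sQ^-1)%g j)) //= big1 ?addr0 => [|l ne]; last first.
  by rewrite mxE; case: eqP => [E|_]; [move: ne; rewrite -E permK eqxx | rewrite mulr0].
rewrite [X in _ * X]mxE permKV eqxx mxE.
rewrite (bigD1 (sP i)) //= big1 ?addr0 => [|l ne]; last first.
  by rewrite mxE eq_sym (negbTE ne) mul0r.
by rewrite !mxE eqxx.
Qed.

End SignedPermEquiv.

Section Arrays.

Variables N k : nat.
Implicit Types (X Y : 'M[int]_(N, k)) (f : pt k -> pt k).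

Definition rowpt X r : pt k := [ffun j => X r j == -1].

Definition act_mx f X : 'M[int]_(N, k) := \matrix_(r, j) sgn (f (rowpt X r) j).

Definition pm1_mx X : Prop := forall r j, X r j = 1 \/ X r j = -1.

Lemma pm1_mxE X : pm1_mx X -> forall r j, X r j = sgn (rowpt X r j).
Proof. by move=> pmX r j; rewrite ffunE; case: (pmX r j) => ->. Qed.

Lemma rowpt_act_mx f X r : rowpt (act_mx f X) r = f (rowpt X r).
Proof. by apply/ffunP => j; rewrite !ffunE mxE sgn_eqN1. Qed.

Lemma pm1_act_mx f X : pm1_mx (act_mx f X).
Proof. by move=> r j; rewrite mxE; case: (f _ j); [right | left]. Qed.

Lemma eq_act_mx f f' X : f =1 f' -> act_mx f X = act_mx f' X.
Proof. by move=> ff'; apply/matrixP => r j; rewrite !mxE ff'. Qed.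

Lemma act_mx_id X : pm1_mx X -> act_mx id X = X.
Proof. by move=> pmX; apply/matrixP => r j; rewrite mxE -pm1_mxE. Qed.

Lemma act_mx_comp f h X : act_mx (h \o f) X = act_mx h (act_mx f X).
Proof. by apply/matrixP => r j; rewrite !mxE rowpt_act_mx. Qed.

Lemma card_agree_mx X (S : {set 'I_k}) (u : pt k) : pm1_mx X ->
  #|[set r | [forall j in S, X r j == sgn (u j)]]| = agree_count (rowpt X) S u.
Proof.
move=> pmX; apply: eq_card => r; rewrite !inE.
by apply: eq_forallb_in => j _; rewrite pm1_mxE // eq_sgn.
Qed.

Lemma is_OAE t X : is_OA t X <-> pm1_mx X /\ has_strength t (rowpt X).
Proof.
split=> [[pmX OA] | [pmX str]]; split=> // S cardS u.
  by rewrite -card_agree_mx // OA // card_ord.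
by rewrite card_agree_mx // str //; apply: card_ord.
Qed.

Lemma is_OA_act_mx t f X : (t <= k)%N ->
  char_preserving t f -> is_OA t X -> is_OA t (act_mx f X).
Proof.
move=> t_le_k cf /is_OAE [pmX]; rewrite has_strengthP // => bal.
apply/is_OAE; split; first exact: pm1_act_mx.
rewrite has_strengthP // => T HT; under eq_bigr do rewrite rowpt_act_mx.
exact: balanced_comp cf bal T HT.
Qed.

Lemma freq_act_mx (g : {perm pt k}) X :
  pm1_mx X -> freq (act_mx g X) = act_freq g (freq X).
Proof.
have freqE Y w : pm1_mx Y -> freq Y w = #|[set r | rowpt Y r == w]|.
  move=> pmY; rewrite ffunE; apply: eq_card => r; rewrite !inE.
  apply/forallP/eqP => [agree | <- j]; last by rewrite -pm1_mxE.
  by apply/ffunP => j; rewrite ffunE (eqP (agree j)) sgn_eqN1.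
move=> pmX; apply/ffunP => w.
rewrite freqE; last exact: pm1_act_mx.
rewrite ffunE freqE //.
apply: eq_card => r; rewrite !inE rowpt_act_mx.
exact: (can2_eq (permK g) (permKV g)).
Qed.

Lemma onecol0 X r : onecol X r ord0 = 1.
Proof.
have -> : (ord0 : 'I_(1 + k)) = lshift k (ord0 : 'I_1) by apply: val_inj.
by rewrite /onecol row_mxEl mxE.
Qed.

Lemma onecol_lift X r j : onecol X r (lift ord0 j) = X r j.
Proof.
have -> : lift (ord0 : 'I_(1 + k)) j = rshift 1 j by apply: val_inj.
by rewrite /onecol row_mxEr.
Qed.

Lemma signed_perm_equiv_coordperm s X : pm1_mx X ->
  signed_perm_equiv (onecol X) (onecol (act_mx (coordperm s) X)).
Proof.
move=> pmX; exists 1%g, (fun=> false), (lift_perm ord0 ord0 s^-1), (fun=> false).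
move=> r l; rewrite perm1 mul1r mulr1.
case: (unliftP ord0 l) => [j ->|->]; last by rewrite lift_perm_id !onecol0.
by rewrite lift_perm_lift !onecol_lift mxE ffunE permKV -pm1_mxE.
Qed.

Lemma signed_perm_equiv_signchange j X : pm1_mx X ->
  signed_perm_equiv (onecol X) (onecol (act_mx (signchange j) X)).
Proof.
move=> pmX; exists 1%g, (fun=> false), 1%g, (fun l => l == lift ord0 j).
move=> r l; rewrite !perm1 mul1r.
case: (unliftP ord0 l) => [i ->|->].
  rewrite !onecol_lift mxE ffunE (inj_eq (@lift_inj _ ord0)) pm1_mxE //.
  by case: eqP => _; rewrite ?sgn_negb ?mulrN1 ?mulr1.
by rewrite !onecol0 (negbTE (neq_lift _ _)) mulr1.
Qed.

Lemma signed_perm_equiv_Rmap i X : pm1_mx X ->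
  signed_perm_equiv (onecol X) (onecol (act_mx (Rmap i) X)).
Proof.
move=> pmX; exists 1%g, (fun r => rowpt X r i), (tperm ord0 (lift ord0 i)).
exists (fun=> false).
move=> r l; rewrite perm1 mulr1.
case: (unliftP ord0 l) => [j ->|->]; last first.
  by rewrite tpermL onecol0 onecol_lift mxE ffunE eqxx -pm1_mxE // mulr1.
have [-> | ji] := eqVneq j i.
  by rewrite tpermR onecol0 onecol_lift [X r i]pm1_mxE // sgn_sqr.
rewrite tpermD ?neq_lift 1?(inj_eq (@lift_inj _ ord0)) 1?eq_sym //.
by rewrite !onecol_lift mxE ffunE (negbTE ji) sgn_addb -!pm1_mxE // mulrC.
Qed.

End Arrays.

Section Groups.

Variable k : nat.
Implicit Types g : {perm pt k}.

Lemma iso_gensP g : g \in iso_gens k ->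
  (exists s, g =1 coordperm s) \/ (exists j, g =1 signchange j).
Proof.
rewrite inE => /orP [/existsP [s /forallP gs] | /existsP [j /forallP gj]].
  by left; exists s => z; apply/eqP.
by right; exists j => z; apply/eqP.
Qed.

Lemma OD_gensP g : g \in OD_gens k -> g \in iso_gens k \/ exists i, g =1 Rmap i.
Proof.
rewrite inE => /orP [gi | ]; first by left.
by rewrite inE => /existsP [i /forallP gi]; right; exists i => z; apply/eqP.
Qed.

Lemma char_preserving_gen t (A : {set {perm pt k}}) :
  (forall b, b \in A -> char_preserving t b) ->
  forall g, g \in <<A>>%g -> char_preserving t g.
Proof.
move=> cpA; apply: gen_ind => [|a b cpa bA].
  by apply: (eq_char_preserving _ (char_preserving_id (t := t))) => z; rewrite perm1.
apply: (eq_char_preserving _ (char_preserving_comp cpa (cpA b bA))) => z.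
by rewrite permM.
Qed.

Lemma char_preserving_G_iso t g : g \in G_iso k -> char_preserving t g.
Proof.
apply: char_preserving_gen => b /iso_gensP [[s bs] | [j bj]].
  exact: eq_char_preserving (fsym bs) (char_preserving_coordperm s).
exact: eq_char_preserving (fsym bj) (char_preserving_signchange j).
Qed.

Lemma char_preserving_G_OD t g : ~~ odd t -> g \in G_OD k -> char_preserving t g.
Proof.
move=> t_even; apply: char_preserving_gen => b /OD_gensP [b_iso | [i bi]].
  exact: char_preserving_G_iso (mem_gen b_iso).
exact: eq_char_preserving (fsym bi) (char_preserving_Rmap i t_even).
Qed.

Lemma signed_perm_equiv_G_OD N g : g \in G_OD k ->
  forall X : 'M[int]_(N, k), pm1_mx X ->
  signed_perm_equiv (onecol X) (onecol (act_mx g X)).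
Proof.
move: g; apply: gen_ind => [X pmX | a b IHa bA X pmX].
  rewrite (@eq_act_mx _ _ _ id) => [|z]; last exact: perm1.
  by rewrite act_mx_id //; apply: signed_perm_equiv_refl.
rewrite (@eq_act_mx _ _ _ (b \o a)) => [|z]; last exact: permM.
rewrite act_mx_comp; apply: signed_perm_equiv_trans (IHa X pmX) _.
have pmY := pm1_act_mx a X.
case/OD_gensP: bA => [/iso_gensP [[s bs] | [j bj]] | [i bi]].
- by rewrite (eq_act_mx _ bs); exact: signed_perm_equiv_coordperm.
- by rewrite (eq_act_mx _ bj); exact: signed_perm_equiv_signchange.
- by rewrite (eq_act_mx _ bi); exact: signed_perm_equiv_Rmap.
Qed.

End Groups.

Section Formulation.

Variables k t : nat.

Lemma MentryE (S : Mrow k t) z : Mentry S z = chi (val S) z.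
Proof. by []. Qed.

Definition signed_row (b : bool) (S : Mrow k t) : Erow k t :=
  Some (if b then inr S else inl S).

Lemma Aeq_signed_row b S z : Aeq (signed_row b S) z = sgn b * Mentry S z.
Proof. by case: b; rewrite /= ?mulN1r ?mul1r. Qed.

Lemma Aeq_inj (i i' : Erow k t) : Aeq i =1 Aeq i' -> i = i'.
Proof.
have chi_neq1 (S : Mrow k t) : exists z, Mentry S z = -1.
  have /andP [/card_gt0P [j jS] _] := valP S.
  by exists [ffun i => i == j]; rewrite MentryE chi_delta jS.
have Mentry_inj (S S' : Mrow k t) : Mentry S =1 Mentry S' -> S = S'.
  by move=> E; apply/val_inj/chi_inj => z; rewrite -!MentryE E.
case: i i' => [[S|S]|] [[S'|S'] |] //= E; have /= := E [ffun => false].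
all: rewrite ?MentryE ?chi_const0 => /eqP // _.
- by rewrite (Mentry_inj S S' E).
- by have [z Sz] := chi_neq1 S; have /eqP := E z; rewrite /= Sz.
- by rewrite (Mentry_inj S S') // => z; apply: oppr_inj; apply: E.
- by have [z Sz] := chi_neq1 S'; have /eqP := E z; rewrite /= Sz.
Qed.

Lemma formulation_sym_char_preserving N (g : {perm pt k}) :
  char_preserving t (g^-1)%g -> formulation_sym N t g.
Proof.
move=> cp; split=> //; split; last first.
  by exists g => w z; rewrite /Aineq (inj_eq perm_inj).
have signed_image b (S : Mrow k t) : exists i' : Erow k t,
    (forall z, Aeq i' (g z) = Aeq (signed_row b S) z) /\ beq N i' = 0.
  have [S' [e [HS' E]]] := cp _ (valP S).
  exists (signed_row (b (+) e) (exist _ S' HS')); split => // z.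
  rewrite !Aeq_signed_row !MentryE /= -[in RHS](permK g z) E.
  by rewrite sgn_addb mulrA.
have row_image (i : Erow k t) : exists i' : Erow k t,
    (forall z, Aeq i' (g z) = Aeq i z) /\ beq N i' = beq N i.
  case: i => [[S|S]|]; last by exists None.
    exact: signed_image false S.
  exact: signed_image true S.
have [f fP] := fin_all_exists row_image.
have f_inj : injective f.
  move=> i1 i2 f12; apply: Aeq_inj => z.
  by rewrite -[z](permKV g) -(proj1 (fP i1)) -(proj1 (fP i2)) f12.
by exists (perm f_inj) => i z; rewrite permE; have [Ef bf] := fP i; split.
Qed.

End Formulation.

Theorem lemma9 (N k t : nat) (X : 'M[int]_(N, k)) :
  (1 <= t)%N -> (t <= k - 1)%N -> is_OA t X ->
  (~~ odd t ->
     (forall g, g \in G_OD k -> formulation_sym N t g) /\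
     (forall g, g \in G_OD k ->
        exists Y : 'M[int]_(N, k),
          is_OA t Y /\ freq Y = act_freq g (freq X) /\ OD_equiv X Y)) /\
  (odd t ->
     (forall g, g \in G_iso k -> formulation_sym N t g) /\
     (forall g, g \in G_iso k ->
        exists Y : 'M[int]_(N, k),
          is_OA t Y /\ freq Y = act_freq g (freq X) /\ isomorphic X Y)).
Proof.
move=> _ t_lt_k OA_X; have t_le_k : (t <= k)%N by lia.
have pmX : pm1_mx X by case/is_OAE: OA_X.
split=> t_parity; split=> g gG.
- by apply/formulation_sym_char_preserving/char_preserving_G_OD; rewrite ?groupV.
- exists (act_mx g X); split.
    exact: is_OA_act_mx t_le_k (char_preserving_G_OD t_parity gG) OA_X.
  split; first exact: freq_act_mx.
  exact: signed_perm_equiv_mx (signed_perm_equiv_G_OD gG pmX).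
- by apply/formulation_sym_char_preserving/char_preserving_G_iso; rewrite groupV.
- exists (act_mx g X); split.
    exact: is_OA_act_mx t_le_k (char_preserving_G_iso gG) OA_X.
  by split; [|exists g => //]; apply: freq_act_mx.
Qed.
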